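(* Let $(X,d)$ be a complete metric space, $N\in\mathbb{N}\setminus\{0\}$, $\alpha:(X\times X)\times(X\times X)\rightarrow[0,+\infty)$ an $N$--transitive mapping on $X\times X$, and $F:X\times X\rightarrow X$ such that for every $\varepsilon>0$ there exists $\delta(\varepsilon)>0$ for which, for all $(x,y),(u,v)\in X\times X$, \[ \varepsilon\leq\tfrac{d(x,u)+d(y,v)}{2}<\varepsilon+\delta(\varepsilon)\Rightarrow\alpha((x,y),(u,v))\,d(F(x,y),F(u,v))<\varepsilon. \] Suppose that: (B1) for all $(x,y),(u,v)\in X\times X$, $\alpha((x,y),(u,v))\geq1$ implies $\alpha((F(x,y),F(y,x)),(F(u,v),F(v,u)))\geq1$; (B2) there exists $(x_{0},y_{0})\in X\times X$ such that $\alpha((x_{0},y_{0}),(F(x_{0},y_{0}),F(y_{0},x_{0})))\geq1$ and $\alpha((F(y_{0},x_{0}),F(x_{0},y_{0})),(y_{0},x_{0}))\geq1$; (B4) for every sequence $\{(x_{n},y_{n})\}$ in $X\times X$ with $x_{n}\rightarrow x\in X$, $y_{n}\rightarrow y\in X$ and $\alpha((x_{n},y_{n}),(x_{n+1},y_{n+1}))\geq1$, $\alpha((y_{n+1},x_{n+1}),(y_{n},x_{n}))\geq1$ for all $n\in\mathbb{N}$, there exists a subsequence $\{(x_{n(k)},y_{n(k)})\}$ with $\alpha((x_{n(k)},y_{n(k)}),(x,y))\geq1$ and $\alpha((y,x),(y_{n(k)},x_{n(k)}))\geq1$ for all $k\in\mathbb{N}$. Then $F$ has a coupled fixed point, i.e.,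 there exists $(x^{\ast},y^{\ast})\in X\times X$ with $x^{\ast}=F(x^{\ast},y^{\ast})$ and $y^{\ast}=F(y^{\ast},x^{\ast})$.
   Context: $\mathbb{N}$ is the set of non-negative integers. For a set $Z$ and $\gamma:Z\times Z\rightarrow[0,+\infty)$, $\gamma$ is $N$--transitive (on $Z$) if for all $z_0,\dots,z_{N+1}\in Z$ with $\gamma(z_i,z_{i+1})\geq1$ for all $i\in\{0,\dots,N\}$ one has $\gamma(z_0,z_{N+1})\geq1$; here $Z=X\times X$. *)

From Stdlib Require Import Reals Lra.
Open Scope R_scope.

Definition is_metric {X : Type} (d : X -> X -> R) : Prop :=
  (forall x y, 0 <= d x y) /\
  (forall x y, d x y = 0 <-> x = y) /\
  (forall x y, d x y = d y x) /\
  (forall x y z, d x z <= d x y + d y z).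

Definition cauchy_seq {X : Type} (d : X -> X -> R) (s : nat -> X) : Prop :=
  forall eps, 0 < eps -> exists N, forall m n, (N <= m)%nat -> (N <= n)%nat ->
    d (s m) (s n) < eps.

Definition converges_to {X : Type} (d : X -> X -> R) (s : nat -> X) (l : X) : Prop :=
  forall eps, 0 < eps -> exists N, forall n, (N <= n)%nat -> d (s n) l < eps.

Definition complete_metric {X : Type} (d : X -> X -> R) : Prop :=
  forall s : nat -> X, cauchy_seq d s -> exists l, converges_to d s l.

Definition N_transitive {Z : Type} (N : nat) (gamma : Z -> Z -> R) : Prop :=
  forall z : nat -> Z,
    (forall i, (i <= N)%nat -> 1 <= gamma (z i) (z (S i))) ->
    1 <= gamma (z 0%nat) (z (S N)).

Definition strictly_increasing (phi : nat -> nat) : Prop :=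
  forall k, (phi k < phi (S k))%nat.

(* View the pair (x, y) as a point of X × X with the averaged metric
   ((d x u + d y v) / 2) and F as the map T (x, y) = (F x y, F y x); a coupled
   fixed point of F is a fixed point of T.  The relation
   "alpha (p, q) >= 1 and alpha (swap q, swap p) >= 1" is preserved by T,
   N-transitive, and T is a Meir-Keeler contraction on related pairs, so the
   Picard orbit of (x0, y0) has vanishing steps.  N-transitivity relates the
   orbit point n to every n + 1 + kN, which lets the Meir-Keeler condition be
   applied across N steps at once and yields the Cauchy property; regularity
   then shows that the limit is fixed. *)
From Stdlib Require Import Reals Lra Lia.
Open Scope R_scope.

Definition rel_N_transitive {Z : Type} (N : nat) (Rel : Z -> Z -> Prop) : Prop :=
  forall z : nat -> Z,
    (forall i, (i <= N)%nat -> Rel (z i) (z (S i))) -> Rel (z 0%nat) (z (S N)).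

Lemma rel_N_transitive_comap {Z W : Type} (N : nat) (Rel : Z -> Z -> Prop) (f : W -> Z) :
  rel_N_transitive N Rel -> rel_N_transitive N (fun a b => Rel (f a) (f b)).
Proof. intros HRel z Hz. exact (HRel (fun i => f (z i)) Hz). Qed.

Lemma rel_N_transitive_converse {Z : Type} (N : nat) (Rel : Z -> Z -> Prop) :
  rel_N_transitive N Rel -> rel_N_transitive N (fun a b => Rel b a).
Proof.
  intros HRel z Hz.
  assert (Hrev := HRel (fun i => z (S N - i)%nat)); cbv beta in Hrev.
  replace (S N - 0)%nat with (S N) in Hrev by lia.
  replace (S N - S N)%nat with 0%nat in Hrev by lia.
  apply Hrev. intros i Hi.
  replace (S N - i)%nat with (S (N - i)) by lia.
  replace (S N - S i)%nat with (N - i)%nat by lia.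
  apply Hz. lia.
Qed.

Lemma rel_N_transitive_and {Z : Type} (N : nat) (Rel1 Rel2 : Z -> Z -> Prop) :
  rel_N_transitive N Rel1 -> rel_N_transitive N Rel2 ->
  rel_N_transitive N (fun a b => Rel1 a b /\ Rel2 a b).
Proof.
  intros H1 H2 z Hz. split; [apply H1 | apply H2]; intros i Hi; apply Hz, Hi.
Qed.

(* The chain n, n+1, ..., n+N-1 followed by a jump n+N ~> n+N+1+kN has N+2 points. *)
Lemma rel_N_transitive_jump (N : nat) (P : nat -> nat -> Prop) :
  rel_N_transitive N P -> (forall n, P n (S n)) ->
  forall k n, P n (n + 1 + k * N)%nat.
Proof.
  intros HP Hsucc k. induction k as [|k IH]; intros n.
  - replace (n + 1 + 0 * N)%nat with (S n) by lia. apply Hsucc.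
  - set (i := fun t => if Nat.leb t N then (n + t)%nat else (n + 1 + S k * N)%nat).
    assert (Hi0 : i 0%nat = n) by (unfold i; simpl; lia).
    assert (HiN : i (S N) = (n + 1 + S k * N)%nat).
    { unfold i. destruct (Nat.leb_spec (S N) N); [lia | reflexivity]. }
    rewrite <- HiN, <- Hi0. apply HP. intros t Ht. unfold i.
    destruct (Nat.leb_spec t N); [|lia].
    destruct (Nat.leb_spec (S t) N).
    + replace (n + S t)%nat with (S (n + t)) by lia. apply Hsucc.
    + replace t with N by lia.
      replace (n + 1 + S k * N)%nat with (n + N + 1 + k * N)%nat by lia.
      apply IH.
Qed.

Lemma strictly_increasing_ge_id (phi : nat -> nat) :
  strictly_increasing phi -> forall k, (k <= phi k)%nat.
Proof.
  intros Hinc k. induction k as [|k IH]; [lia|]. pose proof (Hinc k). lia.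
Qed.

Lemma nonincreasing_meir_keeler_vanishes (c : nat -> R) :
  (forall n, 0 <= c n) -> (forall n, c (S n) <= c n) ->
  (forall e, 0 < e -> exists de, 0 < de /\ forall n, c n < e + de -> c (S n) < e) ->
  forall e, 0 < e -> exists K, forall n, (K <= n)%nat -> c n < e.
Proof.
  intros Hc0 Hdec Hmk e He.
  assert (Hlb : has_lb c).
  { exists 0. intros x [n ->]. unfold opp_seq. pose proof (Hc0 n). lra. }
  destruct (decreasing_cv c Hdec Hlb) as [l Hl].
  assert (Hge : forall n, l <= c n) by (apply decreasing_ineq; assumption).
  assert (Hl0 : l = 0).
  { destruct (Rtotal_order l 0) as [Hneg | [Hzero | Hpos]]; [| exact Hzero |].
    - destruct (Hl (- l) ltac:(lra)) as [K HK].
      specialize (HK K (le_n K)). unfold R_dist in HK. apply Rabs_def2 in HK.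
      pose proof (Hc0 K). lra.
    - destruct (Hmk l Hpos) as [de [Hde Hstep]].
      destruct (Hl de Hde) as [K HK].
      specialize (HK K (le_n K)). unfold R_dist in HK. apply Rabs_def2 in HK.
      assert (c (S K) < l) by (apply Hstep; lra).
      pose proof (Hge (S K)). lra. }
  subst l. destruct (Hl e He) as [K HK]. exists K. intros n Hn.
  specialize (HK n Hn). unfold R_dist in HK. apply Rabs_def2 in HK. lra.
Qed.

Definition meir_keeler_on {Z : Type} (Rel : Z -> Z -> Prop) (D : Z -> Z -> R)
  (T : Z -> Z) : Prop :=
  forall e, 0 < e -> exists de, 0 < de /\
    forall p q, Rel p q -> e <= D p q < e + de -> D (T p) (T q) < e.

Definition rel_regular {Z : Type} (Rel : Z -> Z -> Prop) (D : Z -> Z -> R) : Prop :=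
  forall (s : nat -> Z) (l : Z), (forall n, Rel (s n) (s (S n))) -> converges_to D s l ->
    exists phi, strictly_increasing phi /\ forall k, Rel (s (phi k)) l.

Section MeirKeelerFixedPoint.

Variables (Z : Type) (D : Z -> Z -> R) (T : Z -> Z) (Rel : Z -> Z -> Prop).
Hypothesis HD : is_metric D.

Lemma dist_le_sum_steps (s : nat -> Z) (K : nat) (eta : R) :
  (forall n, (K <= n)%nat -> D (s n) (s (S n)) < eta) ->
  forall j n, (K <= n)%nat -> D (s n) (s (n + j)%nat) <= INR j * eta.
Proof.
  destruct HD as [_ [Hdeq [_ Htri]]].
  intros Hsteps j. induction j as [|j IH]; intros n Hn.
  - rewrite Nat.add_0_r. assert (D (s n) (s n) = 0) by (apply Hdeq; reflexivity).
    simpl. lra.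
  - replace (n + S j)%nat with (S (n + j)) by lia.
    pose proof (Htri (s n) (s (n + j)%nat) (s (S (n + j)))).
    pose proof (IH n Hn). pose proof (Hsteps (n + j)%nat ltac:(lia)).
    rewrite S_INR. lra.
Qed.

Hypothesis Hmk : meir_keeler_on Rel D T.

Lemma meir_keeler_nonexpansive p q : Rel p q -> D (T p) (T q) <= D p q.
Proof.
  destruct HD as [Hd0 [Hdeq _]]. intros Hpq.
  destruct (Rle_lt_or_eq_dec 0 (D p q) (Hd0 p q)) as [Hpos | Hzero].
  - destruct (Hmk _ Hpos) as [de [Hde Hcontr]].
    apply Rlt_le, Hcontr; [exact Hpq | lra].
  - rewrite <- Hzero. symmetry in Hzero. apply Hdeq in Hzero. subst q.
    assert (D (T p) (T p) = 0) by (apply Hdeq; reflexivity). lra.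
Qed.

Lemma meir_keeler_strict e : 0 < e -> exists de, 0 < de /\
  forall p q, Rel p q -> D p q < e + de -> D (T p) (T q) < e.
Proof.
  intros He. destruct (Hmk e He) as [de [Hde Hcontr]].
  exists de. split; [exact Hde|]. intros p q Hpq Hlt.
  destruct (Rlt_or_le (D p q) e).
  - pose proof (meir_keeler_nonexpansive p q Hpq). lra.
  - apply Hcontr; [exact Hpq | lra].
Qed.

Hypothesis Hpres : forall p q, Rel p q -> Rel (T p) (T q).
Variable z0 : Z.
Hypothesis Hz0 : Rel z0 (T z0).

Definition orbit (n : nat) : Z := Nat.iter n T z0.

Lemma orbit_succ n : orbit (S n) = T (orbit n).
Proof. reflexivity. Qed.

Lemma orbit_rel_succ n : Rel (orbit n) (orbit (S n)).
Proof. induction n as [|n IH]; [exact Hz0 | exact (Hpres _ _ IH)]. Qed.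

Lemma orbit_steps_vanish e : 0 < e ->
  exists K, forall n, (K <= n)%nat -> D (orbit n) (orbit (S n)) < e.
Proof.
  apply (nonincreasing_meir_keeler_vanishes (fun n => D (orbit n) (orbit (S n)))).
  - intro n. apply HD.
  - intro n. apply meir_keeler_nonexpansive, orbit_rel_succ.
  - intros e' He'. destruct (meir_keeler_strict e' He') as [de [Hde Hstrict]].
    exists de. split; [exact Hde|]. intro n. apply Hstrict, orbit_rel_succ.
Qed.

Variable N : nat.
Hypothesis HN : N <> 0%nat.

Let HN1 : 1 <= INR N.
Proof. replace 1 with (INR 1) by reflexivity. apply le_INR. lia. Qed.

Hypothesis Htrans : rel_N_transitive N Rel.

Lemma orbit_rel_jump k n : Rel (orbit n) (orbit (n + 1 + k * N)).
Proof.
  apply (rel_N_transitive_jump N (fun a b => Rel (orbit a) (orbit b))).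
  - apply rel_N_transitive_comap, Htrans.
  - apply orbit_rel_succ.
Qed.

Section SmallSteps.

Variables (e de eta : R) (K : nat).
Hypotheses (He : 0 < e) (Heta : 0 < eta) (HNeta : INR N * eta <= de).
Hypothesis Hstrict : forall p q, Rel p q -> D p q < e + de -> D (T p) (T q) < e.
Hypothesis Hsteps : forall n, (K <= n)%nat -> D (orbit n) (orbit (S n)) < eta.

(* Go N small steps from n to n + N, then apply the contraction to the related
   pair (n + N - 1, n + N + kN) given by the induction hypothesis. *)
Lemma orbit_dist_jump_lt k n : (K <= n)%nat ->
  D (orbit n) (orbit (n + 1 + k * N)) < e + INR N * eta.
Proof.
  revert n. induction k as [|k IH]; intros n Hn.
  - replace (n + 1 + 0 * N)%nat with (S n) by lia.
    pose proof (Hsteps n Hn). nra.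
  - set (a := (n + (N - 1))%nat).
    assert (Hjump : D (orbit (S a)) (orbit (S (a + 1 + k * N))) < e).
    { apply (Hstrict (orbit a) (orbit (a + 1 + k * N))); [apply orbit_rel_jump |].
      pose proof (IH a ltac:(unfold a; lia)). lra. }
    replace (S a) with (n + N)%nat in Hjump by (unfold a; lia).
    replace (n + 1 + S k * N)%nat with (S (a + 1 + k * N)) by (unfold a; lia).
    pose proof (proj2 (proj2 (proj2 HD)) (orbit n) (orbit (n + N)%nat)
                  (orbit (S (a + 1 + k * N)))).
    pose proof (dist_le_sum_steps orbit K eta Hsteps N n Hn). lra.
Qed.

Lemma orbit_dist_lt n m : (K <= n)%nat -> (n < m)%nat ->
  D (orbit n) (orbit m) < e + 2 * INR N * eta.
Proof.
  intros Hn Hnm.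
  set (k := ((m - n - 1) / N)%nat). set (j := ((m - n - 1) mod N)%nat).
  assert (Hdiv := Nat.div_mod (m - n - 1) N HN).
  assert (Hj := Nat.mod_upper_bound (m - n - 1) N HN). fold k j in Hdiv, Hj.
  replace m with (n + 1 + k * N + j)%nat by lia.
  pose proof (proj2 (proj2 (proj2 HD)) (orbit n) (orbit (n + 1 + k * N)%nat)
                (orbit (n + 1 + k * N + j)%nat)).
  pose proof (orbit_dist_jump_lt k n Hn).
  pose proof (dist_le_sum_steps orbit K eta Hsteps j (n + 1 + k * N) ltac:(lia)).
  assert (INR j <= INR N) by (apply le_INR; lia).
  assert (INR j * eta <= INR N * eta) by (apply Rmult_le_compat_r; lra).
  lra.
Qed.

End SmallSteps.

Lemma orbit_cauchy : cauchy_seq D orbit.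
Proof.
  destruct HD as [_ [Hdeq [Hsym _]]].
  intros eps Heps.
  destruct (meir_keeler_strict (eps / 2) ltac:(lra)) as [de [Hde Hstrict]].
  assert (Hmin : 0 < Rmin de (eps / 2)) by (apply Rmin_pos; lra).
  pose proof (Rmin_l de (eps / 2)). pose proof (Rmin_r de (eps / 2)).
  set (eta := Rmin de (eps / 2) / (2 * INR N)).
  assert (Heta : 0 < eta) by (apply Rdiv_lt_0_compat; lra).
  assert (HNeta : INR N * eta = Rmin de (eps / 2) / 2) by (unfold eta; field; lra).
  destruct (orbit_steps_vanish eta Heta) as [K HK].
  exists K. intros m n Hm Hn.
  destruct (Nat.lt_total m n) as [Hlt | [-> | Hgt]].
  - pose proof (orbit_dist_lt (eps / 2) de eta K ltac:(lra) Heta ltac:(lra)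
                  Hstrict HK m n Hm Hlt). lra.
  - assert (D (orbit n) (orbit n) = 0) by (apply Hdeq; reflexivity). lra.
  - pose proof (orbit_dist_lt (eps / 2) de eta K ltac:(lra) Heta ltac:(lra)
                  Hstrict HK n m Hn Hgt).
    rewrite Hsym. lra.
Qed.

Hypothesis Hreg : rel_regular Rel D.

Lemma orbit_limit_fixed l : converges_to D orbit l -> T l = l.
Proof.
  destruct HD as [Hd0 [Hdeq [Hsym Htri]]].
  intros Hl. destruct (Hreg orbit l orbit_rel_succ Hl) as [phi [Hinc Hphi]].
  apply Hdeq. destruct (Rle_lt_or_eq_dec 0 (D (T l) l) (Hd0 _ _)) as [Hpos | Hzero];
    [exfalso | lra].
  destruct (Hl (D (T l) l / 2) ltac:(lra)) as [M HM].
  pose proof (strictly_increasing_ge_id phi Hinc M).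
  pose proof (meir_keeler_nonexpansive _ _ (Hphi M)).
  pose proof (HM (phi M) ltac:(lia)). pose proof (HM (S (phi M)) ltac:(lia)).
  pose proof (Htri (T l) (orbit (S (phi M))) l).
  rewrite (Hsym (T l) (orbit (S (phi M)))) in *. rewrite orbit_succ in *. lra.
Qed.

Hypothesis Hcomp : complete_metric D.

Theorem meir_keeler_rel_fixed_point : exists p, T p = p.
Proof.
  destruct (Hcomp orbit orbit_cauchy) as [l Hl].
  exists l. exact (orbit_limit_fixed l Hl).
Qed.

End MeirKeelerFixedPoint.

Definition pair_dist {X : Type} (d : X -> X -> R) (p q : X * X) : R :=
  (d (fst p) (fst q) + d (snd p) (snd q)) / 2.

Definition swap {X : Type} (p : X * X) : X * X := (snd p, fst p).

Definition coupled_map {X : Type} (F : X -> X -> X) (p : X * X) : X * X :=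
  (F (fst p) (snd p), F (snd p) (fst p)).

Definition coupled_rel {X : Type} (alpha : X * X -> X * X -> R) (p q : X * X) : Prop :=
  1 <= alpha p q /\ 1 <= alpha (swap q) (swap p).

Section PairMetric.

Variables (X : Type) (d : X -> X -> R).
Hypothesis Hd : is_metric d.

Lemma pair_dist_metric : is_metric (pair_dist d).
Proof.
  destruct Hd as [Hd0 [Hdeq [Hsym Htri]]]. unfold pair_dist.
  split; [| split; [| split]].
  - intros p q. pose proof (Hd0 (fst p) (fst q)). pose proof (Hd0 (snd p) (snd q)). lra.
  - intros [x y] [u v]; simpl. split.
    + intros Hzero. pose proof (Hd0 x u). pose proof (Hd0 y v).
      assert (x = u) by (apply Hdeq; lra). assert (y = v) by (apply Hdeq; lra).
      subst. reflexivity.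
    + intros Heq; injection Heq as -> ->.
      rewrite !(proj2 (Hdeq _ _) eq_refl). lra.
  - intros p q. rewrite (Hsym (fst p)), (Hsym (snd p)). reflexivity.
  - intros p q r. pose proof (Htri (fst p) (fst q) (fst r)).
    pose proof (Htri (snd p) (snd q) (snd r)). lra.
Qed.

Lemma converges_pair_dist (s : nat -> X * X) (l : X * X) :
  converges_to (pair_dist d) s l <->
  converges_to d (fun n => fst (s n)) (fst l) /\ converges_to d (fun n => snd (s n)) (snd l).
Proof.
  destruct Hd as [Hd0 _]. unfold pair_dist. split.
  - intros Hs. split; intros eps Heps; destruct (Hs (eps / 2) ltac:(lra)) as [K HK];
      exists K; intros n Hn; specialize (HK n Hn);
      pose proof (Hd0 (fst (s n)) (fst l)); pose proof (Hd0 (snd (s n)) (snd l)); lra.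
  - intros [Hfst Hsnd] eps Heps.
    destruct (Hfst eps Heps) as [K1 HK1]. destruct (Hsnd eps Heps) as [K2 HK2].
    exists (K1 + K2)%nat. intros n Hn.
    pose proof (HK1 n ltac:(lia)). pose proof (HK2 n ltac:(lia)). lra.
Qed.

Lemma cauchy_pair_dist (s : nat -> X * X) :
  cauchy_seq (pair_dist d) s ->
  cauchy_seq d (fun n => fst (s n)) /\ cauchy_seq d (fun n => snd (s n)).
Proof.
  destruct Hd as [Hd0 _]. unfold pair_dist.
  intros Hs. split; intros eps Heps; destruct (Hs (eps / 2) ltac:(lra)) as [K HK];
    exists K; intros m n Hm Hn; specialize (HK m n Hm Hn);
    pose proof (Hd0 (fst (s m)) (fst (s n))); pose proof (Hd0 (snd (s m)) (snd (s n))); lra.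
Qed.

Lemma pair_dist_complete : complete_metric d -> complete_metric (pair_dist d).
Proof.
  intros Hcomp s Hs. destruct (cauchy_pair_dist s Hs) as [Hfst Hsnd].
  destruct (Hcomp _ Hfst) as [x Hx]. destruct (Hcomp _ Hsnd) as [y Hy].
  exists (x, y). apply converges_pair_dist. split; assumption.
Qed.

End PairMetric.

Lemma coupled_rel_N_transitive {X : Type} (alpha : X * X -> X * X -> R) (N : nat) :
  N_transitive N alpha -> rel_N_transitive N (coupled_rel alpha).
Proof.
  intros Htrans.
  exact (rel_N_transitive_and N _ _ Htrans
           (rel_N_transitive_converse N _
              (rel_N_transitive_comap N (fun a b => 1 <= alpha a b) swap Htrans))).
Qed.

Lemma coupled_map_preserves_rel {X : Type} (alpha : X * X -> X * X -> R) (F : X -> X -> X) :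
  (forall x y u v, 1 <= alpha (x, y) (u, v) -> 1 <= alpha (F x y, F y x) (F u v, F v u)) ->
  forall p q, coupled_rel alpha p q -> coupled_rel alpha (coupled_map F p) (coupled_map F q).
Proof.
  intros HB1 [x y] [u v] [Hfwd Hbwd].
  split; [exact (HB1 _ _ _ _ Hfwd) | exact (HB1 _ _ _ _ Hbwd)].
Qed.

Lemma coupled_map_meir_keeler {X : Type} (d : X -> X -> R) (alpha : X * X -> X * X -> R)
  (F : X -> X -> X) :
  is_metric d ->
  (forall eps, 0 < eps -> exists delta, 0 < delta /\
     forall x y u v,
       eps <= (d x u + d y v) / 2 < eps + delta ->
       alpha (x, y) (u, v) * d (F x y) (F u v) < eps) ->
  meir_keeler_on (coupled_rel alpha) (pair_dist d) (coupled_map F).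
Proof.
  intros [Hd0 [_ [Hsym _]]] Hcontr e He.
  destruct (Hcontr e He) as [de [Hde Hc]]. exists de. split; [exact Hde|].
  intros [x y] [u v] [H1 H2] Hrange. unfold pair_dist, coupled_map, swap in *; simpl in *.
  assert (Hfwd := Hc x y u v Hrange).
  assert (Hbwd := Hc v u y x ltac:(rewrite (Hsym v y), (Hsym u x); lra)).
  pose proof (Hd0 (F x y) (F u v)). pose proof (Hd0 (F v u) (F y x)).
  rewrite (Hsym (F y x)). nra.
Qed.

Lemma coupled_rel_regular {X : Type} (d : X -> X -> R) (alpha : X * X -> X * X -> R) :
  is_metric d ->
  (forall (xs ys : nat -> X) (x y : X),
     converges_to d xs x -> converges_to d ys y ->
     (forall n, 1 <= alpha (xs n, ys n) (xs (S n), ys (S n)) /\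
                1 <= alpha (ys (S n), xs (S n)) (ys n, xs n)) ->
     exists phi : nat -> nat, strictly_increasing phi /\
       forall k, 1 <= alpha (xs (phi k), ys (phi k)) (x, y) /\
                 1 <= alpha (y, x) (ys (phi k), xs (phi k))) ->
  rel_regular (coupled_rel alpha) (pair_dist d).
Proof.
  intros Hd HB4 s [x y] Hstep Hs.
  apply converges_pair_dist in Hs; [| exact Hd]. destruct Hs as [Hx Hy].
  destruct (HB4 (fun n => fst (s n)) (fun n => snd (s n)) x y Hx Hy) as [phi [Hinc Hphi]].
  - intro n. rewrite <- !surjective_pairing. exact (Hstep n).
  - exists phi. split; [exact Hinc|]. intro k.
    destruct (Hphi k) as [Hfwd Hbwd]. rewrite <- surjective_pairing in Hfwd.
    split; assumption.
Qed.

Theorem corollary2 (X : Type) (d : X -> X -> R)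
  (Hmet : is_metric d) (Hcomp : complete_metric d)
  (N : nat) (HN : (N <> 0)%nat)
  (alpha : (X * X) -> (X * X) -> R)
  (Halpha0 : forall p q, 0 <= alpha p q)
  (Htrans : N_transitive N alpha)
  (F : X -> X -> X)
  (Hcontr : forall eps, 0 < eps -> exists delta, 0 < delta /\
     forall x y u v,
       eps <= (d x u + d y v) / 2 < eps + delta ->
       alpha (x, y) (u, v) * d (F x y) (F u v) < eps)
  (HB1 : forall x y u v, 1 <= alpha (x, y) (u, v) ->
       1 <= alpha (F x y, F y x) (F u v, F v u))
  (HB2 : exists x0 y0,
       1 <= alpha (x0, y0) (F x0 y0, F y0 x0) /\
       1 <= alpha (F y0 x0, F x0 y0) (y0, x0))
  (HB4 : forall (xs ys : nat -> X) (x y : X),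
       converges_to d xs x -> converges_to d ys y ->
       (forall n, 1 <= alpha (xs n, ys n) (xs (S n), ys (S n)) /\
                  1 <= alpha (ys (S n), xs (S n)) (ys n, xs n)) ->
       exists phi : nat -> nat, strictly_increasing phi /\
         forall k, 1 <= alpha (xs (phi k), ys (phi k)) (x, y) /\
                   1 <= alpha (y, x) (ys (phi k), xs (phi k))) :
  exists xs ys : X, xs = F xs ys /\ ys = F ys xs.
Proof.
  destruct HB2 as [x0 [y0 Hz0]].
  destruct (meir_keeler_rel_fixed_point (X * X) (pair_dist d) (coupled_map F)
              (coupled_rel alpha) (pair_dist_metric X d Hmet)
              (coupled_map_meir_keeler d alpha F Hmet Hcontr)
              (coupled_map_preserves_rel alpha F HB1) (x0, y0) Hz0 N HN
              (coupled_rel_N_transitive alpha N Htrans)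
              (coupled_rel_regular d alpha Hmet HB4)
              (pair_dist_complete X d Hmet Hcomp)) as [[x y] Hfix].
  injection Hfix as Hx Hy.
  exists x, y. split; symmetry; assumption.
Qed.
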